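(* Let $m\geq 1$ and let $g=a_0+a_1z+\cdots+a_mz^m\in\mathbb{Z}[z]$ with $a_0\neq 0$ and $a_m\neq 0$. Suppose that for some index $j\in\{0,\ldots,m-1\}$, exactly $j$ zeros of $g$ (counted with multiplicity) lie in the open disk $\{z\in\mathbb{C}:|z|<1/|a_m|\}$ and the remaining $m-j$ zeros lie outside the closed disk $\{z\in\mathbb{C}:|z|\leq 1\}$. Then $g$ is a product of at most $m-j$ nonconstant irreducible polynomials in $\mathbb{Z}[z]$ (up to a constant factor); i.e., whenever $g=c\,g_1g_2\cdots g_r$ with $c\in\mathbb{Z}$ and each $g_i\in\mathbb{Z}[z]$ nonconstant and irreducible, one has $r\leq m-j$. *)

From HB Require Import structures.
From mathcomp Require Import all_boot all_order all_algebra all_field.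
Set Implicit Arguments. Unset Strict Implicit. Unset Printing Implicit Defensive.
Import Order.TTheory GRing.Theory Num.Theory.
Local Open Scope ring_scope.

Definition irreducible_intpoly (p : {poly int}) : Prop :=
  [/\ p != 0, p \isn't a GRing.unit &
      forall q r : {poly int}, p = q * r ->
        q \is a GRing.unit \/ r \is a GRing.unit].

From HB Require Import structures.
From mathcomp Require Import all_boot all_order all_algebra all_field.
Import Order.TTheory GRing.Theory Num.Theory.
Local Open Scope ring_scope.

(* Every nonconstant factor h of g over Z has a complex root of modulus > 1:
   otherwise all its roots lie in |z| < 1/|a_m| <= 1/|lead_coef h|, so
   |h(0)| = |lead_coef h| * prod |roots| < 1, i.e. h(0) = 0 and then g(0) = 0.
   The images of the factors divide the product of the X - r, so distinct
   factors use up distinct roots outside the unit disk, of which there are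
   m - j. *)

Lemma size_le_count_dvdp_prod_XsubC (F : idomainType) (P : pred F)
    (qs : seq {poly F}) (rs : seq F) :
  (forall q, q \in qs -> exists2 z, root q z & P z) ->
  \prod_(q <- qs) q %| \prod_(r <- rs) ('X - r%:P) ->
  (size qs <= count P rs)%N.
Proof.
elim: qs rs => [|q qs IHqs] rs qs_roots //= dvd_qs.
have [z qz Pz] := qs_roots q (mem_head _ _).
have [q' def_q] := factor_theorem _ _ qz.
have z_rs : z \in rs.
  rewrite -root_prod_XsubC; apply: root_dvdp dvd_qs _.
  by rewrite big_cons rootM qz.
have rs_perm := perm_to_rem z_rs.
rewrite (permP rs_perm) /= Pz add1n ltnS.
apply: IHqs => [q0 q0_qs|]; first by apply: qs_roots; rewrite in_cons q0_qs orbT.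
move: dvd_qs; rewrite (perm_big _ rs_perm) !big_cons def_q.
rewrite -mulrA mulrC -mulrA dvdp_mul2l ?polyXsubC_eq0 //.
by move/(dvdp_trans (dvdp_mulIl _ _)).
Qed.

Lemma prodr_norm_lt (R : numDomainType) (c : R) (s : seq R) :
  c <= 1 -> s != [::] -> (forall x, x \in s -> `|x| < c) ->
  \prod_(x <- s) `|x| < c.
Proof.
case: s => // x s c_le1 _ s_lt; rewrite big_cons.
apply: le_lt_trans (s_lt x (mem_head _ _)).
apply: ler_piMr => //; rewrite big_seq; apply: prodr_ile1 => y y_s.
by rewrite normr_ge0 ltW // (lt_le_trans _ c_le1) // s_lt // in_cons y_s orbT.
Qed.

Lemma invr_norm_intr_le1 (R : numFieldType) (a : int) :
  a != 0 -> `|a%:~R : R|^-1 <= 1.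
Proof.
move=> a_neq0; have a_ge1 : 1 <= `|a| by rewrite -gtz0_ge1 normr_gt0.
by rewrite invf_le1 -intr_norm ?ler1z ?ltr0z ?normr_gt0.
Qed.

Lemma intpoly_root_norm_ge_inv_lead (C : numClosedFieldType) (h : {poly int}) :
  (1 < size h)%N -> h`_0 != 0 ->
  exists2 z : C, root (map_poly intr h) z & `|(lead_coef h)%:~R : C|^-1 <= `|z|.
Proof.
move=> h_gt1 h0_neq0; set b : C := (lead_coef h)%:~R.
have intr_inj_C : injective (intr : int -> C) := @intr_inj C.
have [ss def_hC] := closed_field_poly_normal (map_poly (intr : int -> C) h).
rewrite lead_coef_map_inj // -/b in def_hC.
have h_neq0 : h != 0 by rewrite -size_poly_gt0 ltnW.
have b_neq0 : b != 0 by rewrite intr_eq0 lead_coef_eq0.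
have ss_neq0 : ss != [::].
  apply: contraTneq h_gt1 => ss0.
  by rewrite -(size_map_inj_poly intr_inj_C (raddf0 _)) def_hC ss0 big_nil
             size_scale // size_poly1.
have [/hasP[z z_ss bz]|/hasPn ss_small] := boolP (has (fun z => `|b|^-1 <= `|z|) ss).
  by exists z; rewrite // def_hC rootZ // root_prod_XsubC.
have h0_norm : `|h`_0|%:~R = `|b| * \prod_(s <- ss) `|s| :> C.
  rewrite intr_norm -(coef_map intr) -horner_coef0 def_hC hornerZ horner_prod.
  rewrite normrM normr_prod; congr (_ * _); apply: eq_bigr => s _.
  by rewrite hornerXsubC sub0r normrN.
have ss_prod : \prod_(s <- ss) `|s| < `|b|^-1.
  apply: prodr_norm_lt => //; first by rewrite invr_norm_intr_le1 // lead_coef_eq0.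
  by move=> s /ss_small; rewrite real_ltNge ?rpredV ?normr_real.
have h0_ge1 : 1 <= `|h`_0| by rewrite -gtz0_ge1 normr_gt0.
have h0_lt1 : `|h`_0| < 1.
  have b_norm_gt0 : 0 < `|b| by rewrite normr_gt0.
  by rewrite -(ltr_int C) h0_norm -[X in _ < X](mulfV (lt0r_neq0 b_norm_gt0)) ltr_pM2l.
by move: h0_lt1; rewrite ltNge h0_ge1.
Qed.

Lemma intpoly_factor_has_root_gt1 (C : numClosedFieldType) (g h q : {poly int}) :
  g = h * q -> g`_0 != 0 -> (1 < size h)%N ->
  (forall z : C, root (map_poly intr g) z ->
     `|z| < `|(lead_coef g)%:~R : C|^-1 \/ 1 < `|z|) ->
  exists2 z : C, root (map_poly intr h) z & 1 < `|z|.
Proof.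
move=> def_g g0_neq0 h_gt1 g_roots.
have h0_neq0 : h`_0 != 0.
  by apply: contraNneq g0_neq0; rewrite def_g coef0M => ->; rewrite mul0r.
have [z hz z_ge] := intpoly_root_norm_ge_inv_lead C h h_gt1 h0_neq0.
exists z => //.
have /g_roots[z_small|//] : root (map_poly intr g) z by rewrite def_g rmorphM rootM hz.
have g_neq0 : g != 0 by apply: contraNneq g0_neq0 => ->; rewrite coef0.
have q_neq0 : q != 0 by apply: contraNneq g_neq0; rewrite def_g => ->; rewrite mulr0.
have h_neq0 : h != 0 by apply: contraNneq g_neq0; rewrite def_g => ->; rewrite mul0r.
have lead_h_le : `|(lead_coef h)%:~R : C| <= `|(lead_coef g)%:~R : C|.
  rewrite -!intr_norm ler_int def_g lead_coefM normrM ler_peMr //.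
  by rewrite -gtz0_ge1 normr_gt0 lead_coef_eq0.
have : `|z| < `|z|.
  apply: lt_le_trans z_small (le_trans _ z_ge).
  by rewrite lef_pV2 ?posrE ?normr_gt0 ?intr_eq0 ?lead_coef_eq0.
by rewrite ltxx.
Qed.

Lemma all_predU_of_count_disjoint (T : Type) (a b : pred T) (s : seq T) :
  (forall x, a x -> ~~ b x) -> (count a s + count b s)%N = size s ->
  all (predU a b) s.
Proof.
move=> ab_disj count_ab; rewrite all_count -count_ab -count_predUI.
rewrite (@eq_count _ (predI a b) pred0) ?count_pred0 ?addn0 // => x /=.
by apply/negbTE/nandP; case: (boolP (a x)) => [/ab_disj|]; [right | left].
Qed.

Theorem lemma8 (m j : nat) (g : {poly int}) (rs : seq algC) :
  (1 <= m)%N -> size g = m.+1 -> g`_0 != 0 -> lead_coef g != 0 ->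
  (j < m)%N ->
  map_poly (intr : int -> algC) g =
    (lead_coef g)%:~R *: \prod_(r <- rs) ('X - r%:P) ->
  count (fun r : algC => `|r| < `|(lead_coef g)%:~R : algC|^-1) rs = j ->
  count (fun r : algC => 1 < `|r|) rs = (m - j)%N ->
  forall (c : int) (gs : seq {poly int}),
    g = c%:P * \prod_(h <- gs) h ->
    (forall h, h \in gs -> (1 < size h)%N /\ irreducible_intpoly h) ->
    (size gs <= m - j)%N.
Proof.
move=> _ size_g g0_neq0 a_neq0 j_lt_m def_gC count_small count_large.
move=> c gs def_g gs_nonconst.
set a : algC := (lead_coef g)%:~R in def_gC count_small.
have aC_neq0 : a != 0 by rewrite intr_eq0.
have root_gC z : root (map_poly intr g) z = (z \in rs).
  by rewrite def_gC rootZ // root_prod_XsubC.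
have size_rs : size rs = m.
  have := size_map_inj_poly (@intr_inj algC) (raddf0 _) g.
  by rewrite def_gC size_scale // size_prod_XsubC size_g => -[].
have rs_cover : all (predU (fun r => `|r| < `|a|^-1) (fun r => 1 < `|r|)) rs.
  apply: all_predU_of_count_disjoint => [r r_small|]; last first.
    by rewrite count_small count_large size_rs subnKC // ltnW.
  rewrite -real_leNgt ?normr_real ?rpred1 // (le_trans (ltW r_small)) //.
  exact: invr_norm_intr_le1.
rewrite -count_large -(size_map (map_poly (intr : int -> algC))).
apply: size_le_count_dvdp_prod_XsubC => [_ /mapP[h h_gs ->]|].
  have g_split : g = h * (c%:P * \prod_(h' <- rem h gs) h').
    by rewrite def_g (big_rem _ h_gs) /= mulrCA.
  apply: intpoly_factor_has_root_gt1 g_split g0_neq0 (gs_nonconst h h_gs).1 _.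
  by move=> z; rewrite root_gC => /(allP rs_cover)/orP.
rewrite big_map -rmorph_prod -(eqp_dvdr _ (eqp_scale _ aC_neq0)) -def_gC def_g.
by rewrite rmorphM dvdp_mull.
Qed.
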